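(* Let $n\geq3$, let $\sigma:\mathbb{R}\to\mathbb{R}$ be an increasing odd homeomorphism, let $1\leq i<j\leq n$, and let $B\subset\mathbb{R}^n$ be such that $x_ix_j<0$ for all $x=(x_1,\dots,x_n)\in B$ and the closure of $B$ contains a point $p=(p_1,\dots,p_n)$ with $p_i=p_j=0$. Then the closure of $\mathcal M(\sigma,n)B$ contains $Q_{i,j}=\{(x_1,\dots,x_n)\in\mathbb{R}^n:x_ix_j>0\}$.
   Context: For $1\leq k<l\leq n$ define $h_{k,l},v_{k,l}:\mathbb{R}^n\to\mathbb{R}^n$ by $h_{k,l}(x)=x+\sigma^{-1}(x_l)e_k$ and $v_{k,l}(x)=x+\sigma(x_k)e_l$, where $(e_k)$ is the standard basis. $\mathcal M(\sigma,n)$ is the monoid (containing the identity) generated by all $h_{k,l},v_{k,l}$, and $\mathcal M(\sigma,n)B=\{m(x):m\in\mathcal M(\sigma,n),x\in B\}$. *)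

(* R^n is 'rV[R]_n (row vectors) with its
   canonical (product / max-norm) topology from mathcomp-analysis. *)
From HB Require Import structures.
From mathcomp Require Import all_boot all_order all_algebra.
From mathcomp Require Import all_classical all_reals all_analysis.
Set Implicit Arguments. Unset Strict Implicit. Unset Printing Implicit Defensive.
Import Order.TTheory GRing.Theory Num.Theory.
Import numFieldNormedType.Exports.
Local Open Scope ring_scope.
Local Open Scope classical_set_scope.

Section Defs.
Variables (R : realType) (n : nat).

Definition hmap (sinv : R -> R) (k l : 'I_n) (x : 'rV[R]_n) : 'rV[R]_n :=
  \row_m (if m == k then x ord0 m + sinv (x ord0 l) else x ord0 m).

Definition vmap (sigma : R -> R) (k l : 'I_n) (x : 'rV[R]_n) : 'rV[R]_n :=
  \row_m (if m == l then x ord0 m + sigma (x ord0 k) else x ord0 m).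

Inductive inM (sigma sinv : R -> R) : ('rV[R]_n -> 'rV[R]_n) -> Prop :=
| inM_id : inM sigma sinv id
| inM_h (k l : 'I_n) (m : 'rV[R]_n -> 'rV[R]_n) :
    (k < l)%N -> inM sigma sinv m -> inM sigma sinv (hmap sinv k l \o m)
| inM_v (k l : 'I_n) (m : 'rV[R]_n -> 'rV[R]_n) :
    (k < l)%N -> inM sigma sinv m -> inM sigma sinv (vmap sigma k l \o m).

Definition MB (sigma sinv : R -> R) (B : set 'rV[R]_n) : set 'rV[R]_n :=
  [set y | exists m x, inM sigma sinv m /\ B x /\ y = m x].

End Defs.

From HB Require Import structures.
From mathcomp Require Import all_boot all_order all_algebra.
From mathcomp Require Import all_classical all_reals all_analysis.
From mathcomp Require Import ring lra.
Import Order.TTheory GRing.Theory Num.Theory.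
Import numFieldNormedType.Exports.
Local Open Scope ring_scope.
Local Open Scope classical_set_scope.
Set Implicit Arguments. Unset Strict Implicit. Unset Printing Implicit Defensive.

(* Let C be the closure of M(sigma,n)B.  It is closed and stable under every
   shear x |-> x + F(x_b) e_a, with F = sigma^-1 if a < b and F = sigma if a > b.
   Near p, C contains points whose i-th and j-th coordinates are small, nonzero
   and of opposite signs.  If x_b is small with a fixed sign, iterating the
   shear along (a, b) moves x_a in that direction by arbitrarily fine steps;
   this moves every other coordinate to that of a target y and then puts any
   nonzero value on the i-th (or j-th) coordinate while the other one stays 0.
   So C contains both axes of the (x_i, x_j)-plane through y.  Finally, if a
   point of the open quadrant were not in C, pulling back a short horizontal and
   a short vertical segment from it by inverse shears would keep them in the
   quadrant (by the intermediate value theorem, as the axes lie in C) while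
   decreasing x_i + x_j by a fixed amount at each step, which is absurd. *)

Lemma continuous_dist_lt (R : realType) (F : R -> R) (u e : R) :
  {for u, continuous F} -> 0 < e ->
  exists2 d, 0 < d & forall v, `|u - v| < d -> `|F u - F v| < e.
Proof.
move=> Fu e0; have : \forall v \near u, `|F u - F v| < e.
  exact: (cvgrPdist_lt _ _).1 Fu e e0.
by move=> /nbhs_ballP[d /= d0 Hd]; exists d => // v uv; apply: Hd.
Qed.

Lemma homo_sign_mul (R : realType) (F : R -> R) (s u : R) :
  {homo F : x y / x < y} -> F 0 = 0 -> 0 < s * u -> 0 < s * F u.
Proof.
move=> Fh F0; case: (ltgtP s 0) => [s0|s0|->]; last by rewrite mul0r ltxx.
  by rewrite !nmulr_rgt0 // => /Fh; rewrite F0.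
by rewrite !pmulr_rgt0 // => /Fh; rewrite F0.
Qed.

Lemma nat_overshoot (R : realType) (D q : R) : 0 < q ->
  exists N : nat, 0 < N%:R * q - D <= Num.max q (- D).
Proof.
move=> q0; case: (ltP D 0) => D0.
  by exists 0%N; rewrite mul0r sub0r le_max lexx orbT oppr_gt0 D0.
have /andP[lo hi] := truncn_itv (divr_ge0 D0 (ltW q0)).
exists (Num.truncn (D / q)).+1; rewrite le_max.
rewrite ler_pdivlMr // in lo; rewrite ltr_pdivrMr // in hi.
rewrite -addn1 natrD mulrDl mul1r; apply/andP; split; first lra.
by apply/orP; left; lra.
Qed.

Lemma continuous_nonvanishing_gt0 (R : realType) (h : R -> R) (d : R) :
  continuous h -> (forall s, 0 <= s <= d -> h s != 0) -> 0 < h 0 ->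
  forall s, 0 <= s <= d -> 0 < h s.
Proof.
move=> hc nz h0 s /andP[s0 sd]; rewrite ltNge; apply/negP => hs.
have h_0 : Num.min (h 0) (h s) <= 0 <= Num.max (h 0) (h s).
  by rewrite ge_min hs orbT le_max (ltW h0).
have [c /andP[c0 cs] hc0] := IVT s0 (continuous_subspaceT hc) h_0.
rewrite !bnd_simp in c0 cs.
by have := nz c; rewrite c0 (le_trans cs sd) hc0 eqxx; move=> /(_ isT).
Qed.

Section Rows.
Variables (R : realType) (n : nat).
Implicit Types (S C P : set 'rV[R]_n) (x z w : 'rV[R]_n) (F : R -> R) (a b k : 'I_n).

(* [hmap sinv k l = shear sinv k l] and [vmap sigma k l = shear sigma l k]. *)
Definition shear F a b x : 'rV[R]_n :=
  \row_m (if m == a then x ord0 m + F (x ord0 b) else x ord0 m).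

Definition shear_closed F a b C := forall z, C z -> C (shear F a b z).

Definition setr x k (v : R) : 'rV[R]_n := \row_m (if m == k then v else x ord0 m).

Definition setr2 x a b (u v : R) := setr (setr x a u) b v.

Definition sign_pattern (i j : 'I_n) (s : R) : set 'rV[R]_n :=
  [set z | 0 < s * z ord0 i /\ 0 < - s * z ord0 j].

Lemma setr_id x k : setr x k (x ord0 k) = x.
Proof. by apply/rowP => m; rewrite !mxE (ord1 ord0); case: eqP => [->|]. Qed.

Lemma setr_neq x k l v : l != k -> setr x k v ord0 l = x ord0 l.
Proof. by move=> lk; rewrite mxE (negbTE lk). Qed.

Lemma setr2_fst x a b u v : a != b -> setr2 x a b u v ord0 a = u.
Proof. by move=> ab; rewrite !mxE eqxx (negbTE ab). Qed.

Lemma setr2_snd x a b u v : setr2 x a b u v ord0 b = v.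
Proof. by rewrite mxE eqxx. Qed.

Lemma setr_setr2_fst x a b u v u' : a != b -> setr (setr2 x a b u v) a u' = setr2 x a b u' v.
Proof.
move=> ab; apply/rowP => m; rewrite !mxE.
by case: (eqVneq m a) => [->|]; rewrite ?eqxx ?(negbTE ab).
Qed.

Lemma setr_setr2_snd x a b u v v' : setr (setr2 x a b u v) b v' = setr2 x a b u v'.
Proof. by apply/rowP => m; rewrite !mxE; case: eqP. Qed.

Lemma iter_shear F a b N z : a != b ->
  iter N (shear F a b) z = setr z a (z ord0 a + N%:R * F (z ord0 b)).
Proof.
move=> ab; elim: N => [|N /= ->]; first by rewrite mul0r addr0 setr_id.
apply/rowP => m; rewrite !mxE [b == a]eq_sym (negbTE ab).
by case: eqP => // _; rewrite mulrSr mulrDl mul1r addrA.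
Qed.

Lemma shear_setr2_fst F a b x u v : a != b ->
  shear F a b (setr2 x a b u v) = setr2 x a b (u + F v) v.
Proof.
move=> ab; apply/rowP => m; rewrite !mxE eqxx.
by case: (eqVneq m a) => [->|ma]; rewrite ?eqxx ?(negbTE ab) ?(negbTE ma).
Qed.

Lemma shear_setr2_snd F a b x u v : a != b ->
  shear F b a (setr2 x a b u v) = setr2 x a b u (v + F u).
Proof.
move=> ab; apply/rowP => m; rewrite !mxE eqxx (negbTE ab).
by case: eqP.
Qed.

Lemma closure_rowP S x : closure S x <->
  forall e, 0 < e -> exists2 z, S z & forall k, `|x ord0 k - z ord0 k| < e.
Proof.
split=> [Sx e e0 | H U /nbhs_ballP[e /= e0 eU]].
  have [z [Sz xz]] := Sx _ (nbhsx_ballx x e e0).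
  exists z => // k; move: xz; rewrite -ball_normE /ball_ /=; apply: le_lt_trans.
  rewrite [X in _ <= X]/Num.Def.normr /= mx_normrE.
  by apply/bigmax_geP; right; exists (ord0, k); rewrite ?mxE.
have [z Sz xz] := H e e0; exists z; split => //; apply: eU.
rewrite -ball_normE /= [X in X < _]/Num.Def.normr /= mx_normrE.
by apply: bigmax_lt => // -[m k] _; rewrite !mxE (ord1 m).
Qed.

Lemma closure_shear_closed F a b S : continuous F ->
  shear_closed F a b S -> shear_closed F a b (closure S).
Proof.
move=> Fc SF x /closure_rowP Sx; apply/closure_rowP => e e0.
have e20 : 0 < e / 2 by lra.
have [d d0 Fd] := continuous_dist_lt (Fc (x ord0 b)) e20.
have [z Sz xz] : exists2 z, S z & forall k, `|x ord0 k - z ord0 k| < Num.min d (e / 2).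
  by apply: Sx; rewrite lt_min d0.
have {}xz k : `|x ord0 k - z ord0 k| < d /\ `|x ord0 k - z ord0 k| < e / 2.
  by have := xz k; rewrite lt_min => /andP.
exists (shear F a b z) => [|k]; first exact: SF.
rewrite !mxE; case: eqP => _; last by have := (xz k).2; lra.
rewrite opprD addrACA (splitr e); apply: le_lt_trans (ler_normD _ _) _.
by apply: ltrD; [exact: (xz k).2 | exact/Fd/(xz b).1].
Qed.

(* The iterates of [shear F a b] move [z a] by steps [F (z b)], which are small
   and of sign [s] when [z] is close to [w]; stopping right after [v] is passed
   costs at most one step. *)
Lemma closure_shear_setr C P F a b s w v :
  a != b -> `|s| = 1 -> {for 0, continuous F} -> F 0 = 0 ->
  {homo F : x y / x < y} -> shear_closed F a b C -> w ord0 b = 0 ->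
  P `<=` [set z | 0 < s * z ord0 b] -> (forall z u, P z -> P (setr z a u)) ->
  0 <= s * (v - w ord0 a) -> closure (C `&` P) w ->
  closure (C `&` P `&` [set z | 0 < s * (z ord0 a - v)]) (setr w a v).
Proof.
move=> ab s1 F0c F0 Fh CF wb Pb Pa sv /closure_rowP Cw.
apply/closure_rowP => e e0; have e20 : 0 < e / 2 by lra.
have [d d0 Fd] := continuous_dist_lt F0c e20.
have [z [Cz Pz] wz] : exists2 z, (C `&` P) z &
    forall k, `|w ord0 k - z ord0 k| < Num.min d (e / 2).
  by apply: Cw; rewrite lt_min d0.
have {}wz k : `|w ord0 k - z ord0 k| < d /\ `|w ord0 k - z ord0 k| < e / 2.
  by have := wz k; rewrite lt_min => /andP.
have Fzb : `|F (z ord0 b)| < e / 2.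
  by have := (wz b).1; rewrite wb => /Fd; rewrite F0 sub0r normrN.
have q0 : 0 < s * F (z ord0 b) by exact/homo_sign_mul/Pb.
have [N /andP[lo hi]] := nat_overshoot (s * (v - z ord0 a)) q0.
have sz : s * (z ord0 a + N%:R * F (z ord0 b) - v) =
    N%:R * (s * F (z ord0 b)) - s * (v - z ord0 a) by ring.
exists (iter N (shear F a b) z); rewrite iter_shear //.
  split; [split|]; last by rewrite /= mxE eqxx sz.
    by rewrite -iter_shear //; elim: N {lo hi sz} => //= N; apply: CF.
  exact: Pa.
move=> k; rewrite !mxE; case: ifP => _; last by have := (wz k).2; lra.
have sN (r : R) : `|r| = `|s * r| by rewrite normrM s1 mul1r.
have : Num.max (s * F (z ord0 b)) (- (s * (v - z ord0 a))) < e / 2.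
  rewrite gt_max; apply/andP; split.
    by apply: le_lt_trans Fzb; rewrite sN ler_norm.
  have := (wz a).2; rewrite distrC sN => /(le_lt_trans (ler_norm _)).
  have -> : s * (v - z ord0 a) = s * (v - w ord0 a) - s * (z ord0 a - w ord0 a) by ring.
  lra.
by rewrite distrC sN sz ger0_norm ?ltW //; lra.
Qed.

Lemma row_reach (Q : set 'rV[R]_n) u w : Q u ->
  (forall x k, Q x -> x ord0 k != w ord0 k -> Q (setr x k (w ord0 k))) -> Q w.
Proof.
move=> Qu Qstep.
suff Qm m : Q (\row_k (if (k < m)%N then w ord0 k else u ord0 k)).
  by have := Qm n; congr Q; apply/rowP => k; rewrite mxE ltn_ord.
elim: m => [|m]; first by congr Q: Qu; apply/rowP => k; rewrite mxE.
set x := \row_k _ => Qx; case: (ltnP m n) => [mn|nm]; last first.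
  congr Q: Qx; apply/rowP => k; rewrite !mxE.
  have km : (k < m)%N := leq_trans (ltn_ord k) nm.
  by rewrite km ltnW.
have -> : \row_k (if (k < m.+1)%N then w ord0 k else u ord0 k) =
    setr x (Ordinal mn) (w ord0 (Ordinal mn)).
  apply/rowP => k; rewrite !mxE ltnS leq_eqVlt -val_eqE /=.
  by case: eqP => // km; congr (w ord0 _); exact: val_inj.
case: (eqVneq (x ord0 (Ordinal mn)) (w ord0 (Ordinal mn))) => [<-|]; first by rewrite setr_id.
exact: Qstep.
Qed.

Lemma closure_sign_pattern_exists C B (i j : 'I_n) p : B `<=` C ->
  (forall x, B x -> x ord0 i * x ord0 j < 0) -> closure B p ->
  exists2 s : R, `|s| = 1 & closure (C `&` sign_pattern i j s) p.
Proof.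
move=> BC Bij Bp.
have : B `<=` (B `&` sign_pattern i j 1) `|` (B `&` sign_pattern i j (-1)).
  move=> x Bx; have := Bij x Bx; rewrite /sign_pattern /= !mulN1r opprK !mul1r !oppr_gt0.
  case: (ltgtP (x ord0 i) 0) => [xi|xi|->]; last by rewrite mul0r ltxx.
    by rewrite nmulr_rlt0 // => xj; right.
  by rewrite pmulr_rlt0 // => xj; left.
move=> /closureS /(_ p Bp); rewrite closureU => -[Bsp|Bsp]; [exists 1 | exists (-1)];
  rewrite ?normrN ?normr1 //; by apply: closureS Bsp => z [/BC].
Qed.

End Rows.

Section ShearClosedSet.
Variables (R : realType) (n : nat) (F : 'I_n -> 'I_n -> R -> R) (C : set 'rV[R]_n).
Hypotheses (F_cont : forall a b, continuous (F a b)) (F0 : forall a b, F a b 0 = 0).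
Hypothesis F_homo : forall a b, {homo F a b : x y / x < y}.
Hypotheses (C_closed : closed C) (C_shear : forall a b, a != b -> shear_closed (F a b) a b C).
Implicit Types (S : set 'rV[R]_n) (w y : 'rV[R]_n) (s v : R).

Let closure_subC S : S `<=` C -> closure S `<=` C.
Proof. by move=> SC; rewrite [C in _ `<=` C](closure_id C).1 //; exact: closureS. Qed.

Lemma closure_sign_pattern_setr i j s w k v :
  `|s| = 1 -> k != i -> k != j -> w ord0 i = 0 -> w ord0 j = 0 ->
  closure (C `&` sign_pattern i j s) w -> closure (C `&` sign_pattern i j s) (setr w k v).
Proof.
move=> s1 ki kj wi wj Cw.
have Pk z u : sign_pattern i j s z -> sign_pattern i j s (setr z k u).
  by rewrite /sign_pattern /= !setr_neq 1?eq_sym.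
have drop Q : closure (C `&` sign_pattern i j s `&` Q) `<=` closure (C `&` sign_pattern i j s).
  by apply: closureS => z [].
have [sv|sv] := leP 0 (s * (v - w ord0 k)).
  apply: drop; apply: (closure_shear_setr ki s1 (@F_cont k i 0) (@F0 k i) (@F_homo k i)) => //.
  - exact: C_shear.
  - by move=> z [].
have Ns1 : `|- s| = 1 by rewrite normrN.
apply: drop; apply: (closure_shear_setr kj Ns1 (@F_cont k j 0) (@F0 k j) (@F_homo k j)) => //.
- exact: C_shear.
- by move=> z [].
- by rewrite mulNr oppr_ge0 ltW.
Qed.

Lemma closure_sign_pattern_reach i j s w y :
  `|s| = 1 -> w ord0 i = 0 -> w ord0 j = 0 ->
  closure (C `&` sign_pattern i j s) w -> closure (C `&` sign_pattern i j s) (setr2 y i j 0 0).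
Proof.
move=> s1 wi wj Cw; set t := setr2 y i j 0 0.
have ti : t ord0 i = 0 by rewrite !mxE eqxx; case: ifP.
have tj : t ord0 j = 0 by exact: setr2_snd.
pose Q (x : 'rV[R]_n) := [/\ x ord0 i = 0, x ord0 j = 0 & closure (C `&` sign_pattern i j s) x].
have [] // : Q t.
apply: (@row_reach _ _ Q w) => // x k [xi xj Cx] xk.
have ik : i != k by apply: contraNneq xk => <-; rewrite xi ti.
have jk : j != k by apply: contraNneq xk => <-; rewrite xj tj.
split; [by rewrite setr_neq | by rewrite setr_neq |].
by apply: closure_sign_pattern_setr; rewrite // eq_sym.
Qed.

Lemma closure_sign_pattern_axis i j s w a : i != j -> `|s| = 1 ->
  w ord0 i = 0 -> w ord0 j = 0 -> closure (C `&` sign_pattern i j s) w ->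
  a != 0 -> C (setr w i a).
Proof.
move=> ij s1 wi wj Cw a0; have ji : j != i by rewrite eq_sym.
have indep (k l : 'I_n) t : l != k ->
    forall (z : 'rV[R]_n) u, 0 < t * z ord0 l -> 0 < t * setr z k u ord0 l.
  by move=> lk z u; rewrite setr_neq.
have CPQ P Q : C `&` P `&` Q `<=` C by move=> z [[]].
have Cwi : closure (C `&` [set z | 0 < s * z ord0 i]) w by apply: closureS Cw => z [? []].
have Cwj : closure (C `&` [set z | 0 < - s * z ord0 j]) w by apply: closureS Cw => z [? []].
have : s * a != 0 by rewrite mulf_neq0 // -normr_eq0 s1 oner_eq0.
rewrite neq_lt -oppr_gt0 -mulNr => /orP[sa|sa].
  have Ns1 : `|- s| = 1 by rewrite normrN.
  have sv : 0 <= - s * (a - w ord0 i) by rewrite wi subr0 ltW.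
  apply: (closure_subC (CPQ _ _)).
  exact: (closure_shear_setr ij Ns1 (@F_cont i j 0) (@F0 i j) (@F_homo i j)
    (C_shear ij) wj (fun _ h => h) (indep _ _ _ ji) sv Cwj).
have Cj : closure (C `&` [set z | 0 < s * z ord0 j]) w.
  have sv : 0 <= s * (w ord0 j - w ord0 j) by rewrite subrr mulr0.
  have := closure_shear_setr ji s1 (@F_cont j i 0) (@F0 j i) (@F_homo j i) (C_shear ji)
    wi (fun _ h => h) (indep _ _ _ ij) sv Cwi.
  by rewrite setr_id; apply: closureS => z [[Cz _]]; rewrite /= wj subr0.
have sv : 0 <= s * (a - w ord0 i) by rewrite wi subr0 ltW.
apply: (closure_subC (CPQ _ _)).
exact: (closure_shear_setr ij s1 (@F_cont i j 0) (@F0 i j) (@F_homo i j)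
  (C_shear ij) wj (fun _ h => h) (indep _ _ _ ji) sv Cj).
Qed.

Lemma closure_sign_pattern_axes i j s w y a : i != j -> `|s| = 1 ->
  w ord0 i = 0 -> w ord0 j = 0 -> closure (C `&` sign_pattern i j s) w ->
  a != 0 -> C (setr2 y i j a 0) /\ C (setr2 y i j 0 a).
Proof.
move=> ij s1 wi wj /(closure_sign_pattern_reach (y := y) s1 wi wj) Ct a0.
have ti : setr2 y i j 0 0 ord0 i = 0 by exact: setr2_fst.
have tj : setr2 y i j 0 0 ord0 j = 0 by exact: setr2_snd.
have Ct' : closure (C `&` sign_pattern j i (- s)) (setr2 y i j 0 0).
  by apply: closureS Ct => z [Cz [zi zj]]; split => //; rewrite /sign_pattern /= opprK.
have Ns1 : `|- s| = 1 by rewrite normrN.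
split; first by rewrite -(setr_setr2_fst _ 0 _ _ ij); exact: closure_sign_pattern_axis Ct a0.
rewrite -(setr_setr2_snd _ _ _ _ 0).
by apply: (closure_sign_pattern_axis _ Ns1 tj ti Ct' a0); rewrite eq_sym.
Qed.

End ShearClosedSet.

Section Descent.
Variable R : realType.
Implicit Types (D : R -> R -> Prop) (d c eta : R).

Let itv0 (d : R) : 0 < d -> (0 : R) <= 0 <= d. Proof. by move=> d0; rewrite lexx ltW. Qed.

(* Two curves [(a1, b1)] and [(a2, b2)] on [[0, d]], in the open quadrant and
   off [D]: the backward images under inverse shears of a horizontal and a
   vertical segment of length [d] from a common point.  Each pullback lowers
   [b1 d + a2 d] by at least [min (f d) (g d)]. *)
Record descent D d c (a1 b1 a2 b2 : R -> R) : Prop := Descent {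
  descent_cont : [/\ continuous a1, continuous b1, continuous a2 & continuous b2];
  descent_fst : forall s, 0 <= s <= d -> [/\ 0 < a1 s, 0 < b1 s & ~ D (a1 s) (b1 s)];
  descent_snd : forall s, 0 <= s <= d -> [/\ 0 < a2 s, 0 < b2 s & ~ D (a2 s) (b2 s)];
  descent_start : a1 0 = a2 0 /\ b1 0 = b2 0;
  descent_spread : [/\ a1 0 + d <= a1 d, b1 d <= b1 0, b2 0 + d <= b2 d & a2 d <= a2 0];
  descent_bound : b1 d + a2 d <= c }.

Lemma descent_swap D d c (a1 b1 a2 b2 : R -> R) :
  descent D d c a1 b1 a2 b2 -> descent (fun a b => D b a) d c b2 a2 b1 a1.
Proof.
case=> [[? ? ? ?] fst snd [? ?] [? ? ? ?] ?]; split => //; try lra.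
- by move=> s /snd[].
- by move=> s /fst[].
Qed.

Lemma descent_shear D (F a1 b1 a2 b2 : R -> R) d c eta : 0 < d ->
  continuous F -> {homo F : x y / x < y} -> eta <= F d ->
  (forall b, 0 < b -> D (F b) b) -> (forall a b, D a b -> D (a + F b) b) ->
  descent D d c a1 b1 a2 b2 -> F (b1 0) < a1 0 ->
  descent D d (c - eta) (fun s => a1 s - F (b1 s)) b1 (fun s => a2 s - F (b2 s)) b2.
Proof.
move=> d0 Fc Fh etad Dax Dsh [[c1 c2 c3 c4] fst snd [e1 e2] [s1 s2 s3 s4] bnd] start.
have Fle := ltW_homo Fh.
have shear_curve (a b : R -> R) : continuous a -> continuous b -> 0 < a 0 - F (b 0) ->
    (forall s, 0 <= s <= d -> [/\ 0 < a s, 0 < b s & ~ D (a s) (b s)]) ->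
    [/\ continuous (fun s => a s - F (b s)) &
    forall s, 0 <= s <= d -> [/\ 0 < a s - F (b s), 0 < b s & ~ D (a s - F (b s)) (b s)]].
  move=> ac bc ab0 ab.
  have Fb : continuous (fun s => F (b s)).
    by move=> x; apply: (continuous_comp (bc x) (Fc (b x))).
  have abc : continuous (fun s => a s - F (b s)).
    by move=> x; exact: (continuousB (ac x) (Fb x)).
  split=> // s hs; have [_ bs Dab] := ab s hs; split => //.
    apply: (continuous_nonvanishing_gt0 abc) ab0 _ hs => r /ab[_ br Dabr].
    by rewrite subr_eq0; apply: contra_not_neq Dabr => ->; apply: Dax.
  by move/Dsh; rewrite subrK.
have fst0 : 0 < a1 0 - F (b1 0) by rewrite subr_gt0.
have snd0 : 0 < a2 0 - F (b2 0) by rewrite -e1 -e2.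
have [c1' fst'] := shear_curve _ _ c1 c2 fst0 fst.
have [c2' snd'] := shear_curve _ _ c3 c4 snd0 snd.
have [_ b20 _] := snd 0 (itv0 d0).
have Fb1 := Fle _ _ s2.
have Fb2 : F (b2 0) <= F (b2 d) by apply: Fle; lra.
have Fd : F d <= F (b2 d) by apply: Fle; lra.
split => //; first by rewrite e1 e2.
  by split => //; lra.
lra.
Qed.

Section Plane.
Variables (D : R -> R -> Prop) (f g : R -> R).
Hypotheses (f_cont : continuous f) (g_cont : continuous g).
Hypotheses (f_homo : {homo f : x y / x < y}) (g_homo : {homo g : x y / x < y}).
Hypotheses (fK : cancel f g) (f0 : f 0 = 0).
Hypothesis D_shear_fst : forall a b, D a b -> D (a + f b) b.
Hypothesis D_shear_snd : forall a b, D a b -> D a (b + g a).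
Hypothesis D_axes : forall a, 0 < a -> D a 0 /\ D 0 a.

(* The common starting point decides which inverse shear keeps both curves in
   the quadrant; it cannot lie on [a = f b], which is the image of an axis. *)
Lemma descent_step d c (a1 b1 a2 b2 : R -> R) : 0 < d ->
  descent D d c a1 b1 a2 b2 ->
  exists a1' b1' a2' b2', descent D d (c - Num.min (f d) (g d)) a1' b1' a2' b2'.
Proof.
move=> d0 Dc; have [_ fst _ [e1 e2] _ _] := Dc.
have [_ b10 Dab0] := fst 0 (itv0 d0).
have Df b : 0 < b -> D (f b) b by move=> /D_axes[_ /D_shear_fst]; rewrite add0r.
case: (ltgtP (f (b1 0)) (a1 0)) => [fa|af|fa]; last by rewrite -fa in Dab0; have := Df _ b10.
  by do 4 eexists; apply: descent_shear Dc fa => //; rewrite ge_min lexx.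
have ga : g (a2 0) < b2 0 by rewrite -e1 -e2 -[b1 0]fK g_homo.
have Dg a : 0 < a -> D a (g a) by move=> /D_axes[/D_shear_snd]; rewrite add0r.
have etag : Num.min (f d) (g d) <= g d by rewrite ge_min lexx orbT.
have := descent_shear (D := fun a b => D b a) d0 g_cont g_homo etag Dg
  (fun a b => @D_shear_snd b a) (descent_swap Dc) ga.
by move=> /descent_swap Dc'; do 4 eexists; exact: Dc'.
Qed.

Lemma plane_segment_meets Y1 Y2 d : 0 < Y1 -> 0 < Y2 -> 0 < d ->
  exists2 s, 0 <= s <= d & D (Y1 + s) Y2 \/ D Y1 (Y2 + s).
Proof.
move=> Y1p Y2p d0; apply: contrapT => Hno.
have cS (Y : R) : continuous (fun s => Y + s).
  by move=> x; apply: continuousD; [exact: cst_continuous | exact: cvg_id].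
have base : descent D d (Y1 + Y2) (fun s => Y1 + s) (fun=> Y2) (fun=> Y1) (fun s => Y2 + s).
  split; rewrite ?addr0 //; try by split; lra.
  - by split => //; exact: cst_continuous.
  - move=> s /andP[s0 sd]; split; [lra | lra |].
    by move=> Ds; apply: Hno; exists s; [rewrite s0 | left].
  - move=> s /andP[s0 sd]; split; [lra | lra |].
    by move=> Ds; apply: Hno; exists s; [rewrite s0 | right].
  - lra.
pose eta := Num.min (f d) (g d).
have eta0 : 0 < eta.
  by rewrite lt_min -{1}f0 f_homo //= -[X in X < _](fK 0) f0 g_homo.
have Dk k : exists a1 b1 a2 b2, descent D d (Y1 + Y2 - k%:R * eta) a1 b1 a2 b2.
  elim: k => [|k [a1 [b1 [a2 [b2 /(descent_step d0)]]]]].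
    by do 4 eexists; rewrite mul0r subr0; exact: base.
  by rewrite mulrSr mulrDl mul1r opprD addrA.
have [k Yk] : exists k : nat, Y1 + Y2 < k%:R * eta.
  by exists (Num.truncn ((Y1 + Y2) / eta)).+1; rewrite -ltr_pdivrMr // truncnS_gt.
have [a1 [b1 [a2 [b2 [_ fst snd _ _ bnd]]]]] := Dk k.
have dd : 0 <= d <= d by rewrite lexx ltW.
by have [_ ? _] := fst d dd; have [? _ _] := snd d dd; lra.
Qed.

End Plane.

End Descent.

Section Quadrant.
Variables (R : realType) (n : nat) (sigma sinv : R -> R).
Hypotheses (sigma_cont : continuous sigma) (sinv_cont : continuous sinv).
Hypotheses (sigma_homo : {homo sigma : x y / x < y}) (sinv_homo : {homo sinv : x y / x < y}).
Hypotheses (sinvK : cancel sinv sigma) (sinv0 : sinv 0 = 0).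
Hypothesis sigma_odd : forall x, sigma (- x) = - sigma x.
Hypothesis sinv_odd : forall x, sinv (- x) = - sinv x.

Lemma closed_quadrant (C : set 'rV[R]_n) (i j : 'I_n) (y : 'rV[R]_n) : i != j ->
  closed C -> shear_closed sinv i j C -> shear_closed sigma j i C ->
  (forall a, a != 0 -> C (setr2 y i j a 0) /\ C (setr2 y i j 0 a)) ->
  0 < y ord0 i * y ord0 j -> C y.
Proof.
move=> ij Ccl Ci Cj axes yij.
have [e e1 [yi yj]] : exists2 e : R, (e = 1 \/ e = -1) & 0 < e * y ord0 i /\ 0 < e * y ord0 j.
  case: (ltgtP (y ord0 i) 0) => yi0; last by rewrite yi0 mul0r ltxx in yij.
    by exists (-1); [right | rewrite !mulN1r !oppr_gt0; split => //; rewrite -(nmulr_rgt0 _ yi0)].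
  by exists 1; [left | rewrite !mul1r; split => //; rewrite -(pmulr_rgt0 _ yi0)].
have ee : e * e = 1 by case: e1 => ->; rewrite ?mulN1r ?opprK ?mul1r.
have odd_e (h : R -> R) x : (forall x, h (- x) = - h x) -> h (e * x) = e * h x.
  by case: e1 => -> hodd; rewrite ?mul1r // !mulN1r hodd.
have e0 : e != 0 by case: e1 => ->; rewrite ?oppr_eq0 oner_eq0.
(* With [e] the common sign of [y i] and [y j], oddness of [sigma] and [sinv]
   turns the quadrant of [y] into the positive one. *)
pose D a b := C (setr2 y i j (e * a) (e * b)).
rewrite (closure_id C).1 //; apply/closure_rowP => r r0.
have [||||s /andP[s0 sr] Ds] := @plane_segment_meets _ D sinv sigma sinv_cont sigma_cont
  sinv_homo sigma_homo sinvK sinv0 _ _ _ _ _ (r / 2) yi yj.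
- move=> a b; rewrite /D => /Ci; rewrite shear_setr2_fst //.
  by rewrite mulrDr odd_e.
- move=> a b; rewrite /D => /Cj; rewrite shear_setr2_snd //.
  by rewrite mulrDr odd_e.
- move=> a a0; rewrite /D mulr0; apply: axes.
  by rewrite mulf_neq0 // gt_eqF.
- lra.
have near u v : `|y ord0 i - u| < r -> `|y ord0 j - v| < r ->
    forall k, `|y ord0 k - setr2 y i j u v ord0 k| < r.
  move=> yu yv k; rewrite !mxE.
  by case: (eqVneq k j) => [->|_] //; case: (eqVneq k i) => [->|_] //; rewrite subrr normr0.
have es : `|e * s| < r.
  by rewrite normrM; case: e1 => ->; rewrite ?normrN normr1 mul1r ger0_norm //; lra.
have yes (u : R) : `|u - (u + e * s)| < r by rewrite opprD addrA subrr sub0r normrN.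
move: Ds; rewrite /D !mulrDr !mulrA ee !mul1r => -[Ds|Ds].
  exists (setr2 y i j (y ord0 i + e * s) (y ord0 j)) => //.
  by apply: near; rewrite ?yes ?subrr ?normr0.
exists (setr2 y i j (y ord0 i) (y ord0 j + e * s)) => //.
by apply: near; rewrite ?yes ?subrr ?normr0.
Qed.

End Quadrant.

Definition shear_fn (R : realType) (n : nat) (sigma sinv : R -> R) (a b : 'I_n) :=
  if (a < b)%N then sinv else sigma.

Lemma MB_shear_closed (R : realType) (n : nat) (sigma sinv : R -> R) (B : set 'rV[R]_n)
  (a b : 'I_n) : a != b -> shear_closed (shear_fn sigma sinv a b) a b (MB sigma sinv B).
Proof.
rewrite /shear_fn => ab _ [m [x [Mm [Bx ->]]]]; case: ltnP => [lt_ab|le_ba].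
  by exists (hmap sinv a b \o m), x; split; [exact: inM_h | split].
have lt_ba : (b < a)%N by rewrite ltn_neqAle le_ba andbT val_eqE eq_sym.
by exists (vmap sigma b a \o m), x; split; [exact: inM_v | split].
Qed.

Theorem lemma5 (R : realType) (n : nat) (sigma sinv : R -> R)
  (i j : 'I_n) (B : set 'rV[R]_n) (p : 'rV[R]_n) :
  (3 <= n)%N ->
  (* sigma is an increasing odd homeomorphism with inverse sinv *)
  continuous sigma -> continuous sinv ->
  cancel sigma sinv -> cancel sinv sigma ->
  (forall x y : R, x < y -> sigma x < sigma y) ->
  (forall x : R, sigma (- x) = - sigma x) ->
  (i < j)%N ->
  (forall x, B x -> x ord0 i * x ord0 j < 0) ->
  closure B p -> p ord0 i = 0 -> p ord0 j = 0 ->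
  [set x : 'rV[R]_n | 0 < x ord0 i * x ord0 j] `<=` closure (MB sigma sinv B).
Proof.
move=> _ sigma_cont sinv_cont sigmaK sinvK sigma_homo sigma_odd lt_ij B_sign Bp pi pj y yij.
have ij : i != j by rewrite neq_ltn lt_ij.
have ji : j != i by rewrite eq_sym.
have sinv_homo : {homo sinv : x y / x < y}.
  by move=> x x' xx'; rewrite ltNge -(le_mono sigma_homo) !sinvK -ltNge.
have sinv_odd x : sinv (- x) = - sinv x by rewrite -{1}(sinvK x) -sigma_odd sigmaK.
have sinv0 : sinv 0 = 0 by have := sinv_odd 0; rewrite oppr0; lra.
pose F := @shear_fn R n sigma sinv.
have F_cont a b : continuous (F a b) by rewrite /F /shear_fn; case: ifP.
have F0 a b : F a b 0 = 0 by rewrite /F /shear_fn; case: ifP; rewrite // -{1}sinv0 sinvK.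
have F_homo a b : {homo F a b : x y / x < y} by rewrite /F /shear_fn; case: ifP.
set C := closure (MB sigma sinv B).
have C_closed : closed C by exact: closed_closure.
have C_shear a b (ab : a != b) : shear_closed (F a b) a b C.
  exact: closure_shear_closed (F_cont a b) (MB_shear_closed (B := B) ab).
have BC : B `<=` C by move=> x Bx; apply: subset_closure; exists id, x; split => //; exact: inM_id.
have [s s1 Cp] := closure_sign_pattern_exists BC B_sign Bp.
apply: (closed_quadrant sigma_cont sinv_cont sigma_homo sinv_homo sinvK sinv0 sigma_odd sinv_odd
  ij C_closed) yij.
- by have := C_shear _ _ ij; rewrite /F /shear_fn lt_ij.
- by have := C_shear j i ji; rewrite /F /shear_fn ltnNge ltnW.
- by move=> a /(closure_sign_pattern_axes F_cont F0 F_homo C_closed C_shear y ij s1 pi pj Cp).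
Qed.
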